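(* Let $R\subseteq\mathbb Q$ be an infinite set such that there exist computable functions $\tau_1,\tau_2\colon\mathbb N\to\mathbb Z$ with $\tau_2(k)\neq0$ for all $k\in\mathbb N$ and $\{\tau_1(k)/\tau_2(k):k\in\mathbb N\}=R$. If the set of all Diophantine equations which have at most finitely many solutions in $R$ is recursively enumerable, then there exists an algorithm which decides, for any given Diophantine equation, whether or not it has a solution in $R$.
   Context: $\mathbb N=\{0,1,2,\ldots\}$. A Diophantine equation is an equation $D(x_1,\ldots,x_n)=0$ with $D\in\mathbb Z[x_1,\ldots,x_n]$ for some $n\ge1$; such equations are coded as natural numbers so that recursiveness and recursive enumerability of sets of them make sense. A solution in $R$ means a tuple in $R^n$. *)

(* Computability is modelled by (loosely-typed) mu-recursive
   functions on lists of naturals, with a relational big-step semantics. *)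
From HB Require Import structures.
From mathcomp Require Import all_boot all_order all_algebra.
Set Implicit Arguments. Unset Strict Implicit. Unset Printing Implicit Defensive.
Import Order.TTheory GRing.Theory Num.Theory.

Inductive recf : Type :=
| RZero : recf
| RSucc : recf
| RProj : nat -> recf                (* i-th argument (0 if absent) *)
| RComp : recf -> seq recf -> recf
| RPrim : recf -> recf -> recf
| RMu   : recf -> recf.

Inductive eval : recf -> seq nat -> nat -> Prop :=
| eZero v : eval RZero v 0
| eSucc v : eval RSucc v (head 0 v).+1
| eProj i v : eval (RProj i) v (nth 0 v i)
| eComp f gs v ws y : evals gs v ws -> eval f ws y -> eval (RComp f gs) v y
| ePrim0 f g v y : eval f v y -> eval (RPrim f g) (0 :: v) y
| ePrimS f g n v r y : eval (RPrim f g) (n :: v) r -> eval g (n :: r :: v) y ->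
    eval (RPrim f g) (n.+1 :: v) y
| eMu f v n : eval f (n :: v) 0 ->
    (forall m, m < n -> exists k, eval f (m :: v) k.+1) -> eval (RMu f) v n
with evals : seq recf -> seq nat -> seq nat -> Prop :=
| esNil v : evals [::] v [::]
| esCons g gs v w ws : eval g v w -> evals gs v ws -> evals (g :: gs) v (w :: ws).

Definition code_int (z : int) : nat :=
  match z with Posz n => n.*2 | Negz n => n.*2.+1 end.

Definition cpair (a b : nat) : nat := ((a + b) * (a + b).+1)./2 + b.

Definition computable_NZ (f : nat -> int) : Prop :=
  exists e : recf, forall k, eval e [:: k] (code_int (f k)).

Inductive zpoly : Type :=
| PVar : nat -> zpoly
| PConst : int -> zpoly
| PAdd : zpoly -> zpoly -> zpoly
| PMul : zpoly -> zpoly -> zpoly.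

Fixpoint code_zpoly (p : zpoly) : nat :=
  match p with
  | PVar i => 4 * i
  | PConst z => (4 * code_int z).+1
  | PAdd p q => (4 * cpair (code_zpoly p) (code_zpoly q)).+2
  | PMul p q => (4 * cpair (code_zpoly p) (code_zpoly q)).+3
  end.

(* value at a tuple (variables beyond the tuple read as 0) *)
Fixpoint zpeval (p : zpoly) (x : seq rat) : rat :=
  match p with
  | PVar i => nth 0%R x i
  | PConst z => z%:~R
  | PAdd p q => (zpeval p x + zpeval q x)%R
  | PMul p q => (zpeval p x * zpeval q x)%R
  end.

(* A Diophantine equation D(x_1,...,x_n) = 0 with n = (dioph_nv d).+1 >= 1. *)
Record dioph := Dioph { dioph_nv : nat; dioph_poly : zpoly }.

Definition code_dioph (d : dioph) : nat :=
  cpair (dioph_nv d) (code_zpoly (dioph_poly d)).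

Definition solution_in (R : rat -> Prop) (d : dioph) (s : seq rat) : Prop :=
  size s = (dioph_nv d).+1 /\ (forall q, q \in s -> R q) /\
  zpeval (dioph_poly d) s = 0%R.

Definition has_solution_in (R : rat -> Prop) (d : dioph) : Prop :=
  exists s, solution_in R d s.

Definition finitely_many_solutions_in (R : rat -> Prop) (d : dioph) : Prop :=
  exists L : seq (seq rat), forall s, solution_in R d s -> s \in L.

Definition re_dioph (P : dioph -> Prop) : Prop :=
  exists e : recf, forall c : nat,
    (exists y, eval e [:: c] y) <-> (exists d, c = code_dioph d /\ P d).

Definition decidable_dioph (P : dioph -> Prop) : Prop :=
  exists e : recf, forall d : dioph,
    (P d -> eval e [:: code_dioph d] 1) /\ (~ P d -> eval e [:: code_dioph d] 0).

Definition infinite_set (R : rat -> Prop) : Prop :=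
  ~ exists s : seq rat, forall q, R q -> q \in s.

(* Since R is infinite, an equation D(x_1, ..., x_n) = 0 has a solution in R iff the
   equation D(x_2, ..., x_(n+1)) = 0, with a fresh dummy variable x_1, has infinitely many.
   So the equations without a solution in R are, up to a computable transformation of
   codes, members of the r.e. set of the hypothesis, and membership is witnessed by a halting
   time of its enumerator. The equations with a solution are witnessed by a tuple of indices
   into the enumeration k |-> tau1(k)/tau2(k) of R, which is checked by exact rational
   arithmetic on codes. Searching for the least witness of either kind decides solvability. *)

From HB Require Import structures.
From mathcomp Require Import all_boot all_order all_algebra.
From mathcomp Require Import zify ring.
From Stdlib Require Import Classical.
Import Order.TTheory GRing.Theory Num.Theory.
Set Implicit Arguments. Unset Strict Implicit.

Definition rcomp (n : nat) (F : seq nat -> nat) :=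
  exists f : recf, forall v, size v = n -> eval f v (F v).

Lemma rcomp_ext n F G : rcomp n F -> (forall v, size v = n -> F v = G v) -> rcomp n G.
Proof. by move=> [f Hf] E; exists f => v Hv; rewrite -E //; apply: Hf. Qed.

Ltac rcomp_conv := let H := fresh in move=> H; refine (rcomp_ext H _).

Lemma rcomp_proj n i : rcomp n (fun v => nth 0 v i).
Proof. by exists (RProj i) => v _; constructor. Qed.

Fixpoint rconst c := if c is c'.+1 then RComp RSucc [:: rconst c'] else RZero.

Lemma eval_rconst c v : eval (rconst c) v c.
Proof.
elim: c => [|c IH] /=; first by constructor.
apply: (@eComp _ _ _ [:: c]); first by constructor; [exact: IH|constructor].
exact: (eSucc [:: c]).
Qed.

Lemma rcomp_const n c : rcomp n (fun _ => c).
Proof. by exists (rconst c) => v _; apply: eval_rconst. Qed.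

Fixpoint rcomp_all n (Gs : seq (seq nat -> nat)) : Prop :=
  if Gs is G :: Gs' then rcomp n G /\ rcomp_all n Gs' else True.

Lemma rcomp_compose m n F Gs : rcomp m F -> size Gs = m -> rcomp_all n Gs ->
  rcomp n (fun v => F (map (fun G => G v) Gs)).
Proof.
move=> [f Hf] Hs HG.
have [gs Hgs] : exists gs, forall v, size v = n -> evals gs v (map (fun G => G v) Gs).
  elim: Gs {Hs} HG => [|G Gs IH] /= => [_|[[g Hg] /IH [gs Hgs]]].
    by exists [::] => v _; constructor.
  by exists (g :: gs) => v Hv; constructor; [apply: Hg|apply: Hgs].
exists (RComp f gs) => v Hv; econstructor; first exact: Hgs.
by apply: Hf; rewrite size_map.
Qed.

Lemma rcomp1 n F G : rcomp 1 F -> rcomp n G -> rcomp n (fun v => F [:: G v]).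
Proof. by move=> HF HG; apply: (@rcomp_compose _ _ _ [:: G] HF). Qed.

Lemma rcomp2 n F G1 G2 : rcomp 2 F -> rcomp n G1 -> rcomp n G2 ->
  rcomp n (fun v => F [:: G1 v; G2 v]).
Proof. by move=> HF H1 H2; apply: (@rcomp_compose _ _ _ [:: G1; G2] HF). Qed.

Definition projs_from j k : seq (seq nat -> nat) := map (fun i v => nth 0 v i) (iota j k).

Lemma size_projs_from j k : size (projs_from j k) = k.
Proof. by rewrite size_map size_iota. Qed.

Lemma rcomp_all_projs_from n j k : rcomp_all n (projs_from j k).
Proof. by rewrite /projs_from; elim: k j => [|k IH] j //=; split; [exact: rcomp_proj|exact: IH]. Qed.

Lemma map_projs_from j k v : size v = j + k -> map (fun G => G v) (projs_from j k) = drop j v.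
Proof.
move=> Hv; rewrite /projs_from -map_comp.
rewrite -[drop j v](mkseq_nth 0) size_drop Hv addKn /mkseq.
rewrite -[j]addn0 iotaDl -map_comp; apply: eq_map => i /=.
by rewrite nth_drop addn0.
Qed.

Fixpoint prec (F G : seq nat -> nat) (k : nat) (w : seq nat) : nat :=
  if k is k'.+1 then G (k' :: prec F G k' w :: w) else F w.

Lemma rcomp_prec n F G : rcomp n F -> rcomp n.+2 G ->
  rcomp n.+1 (fun v => prec F G (head 0 v) (behead v)).
Proof.
move=> [f Hf] [g Hg]; exists (RPrim f g) => [[|k w]] //= [Hw].
elim: k => [|k IH] /=; first by constructor; apply: Hf.
by econstructor; first exact: IH; apply: Hg => /=; rewrite Hw.
Qed.

Lemma rcomp_loop n I S C : rcomp n I -> rcomp n.+2 S -> rcomp n C ->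
  rcomp n (fun v => prec I S (C v) v).
Proof.
move=> HI HS HC.
have := @rcomp_compose _ _ _ (C :: projs_from 0 n) (rcomp_prec HI HS).
rewrite /= size_projs_from => /(_ n erefl (conj HC (rcomp_all_projs_from n 0 n))).
by rcomp_conv => v Hv /=; rewrite map_projs_from ?drop0.
Qed.

Lemma rcomp_succ n F : rcomp n F -> rcomp n (fun v => (F v).+1).
Proof.
move=> HF; have H1 : rcomp 1 (fun v => (head 0 v).+1) by exists RSucc => v _; constructor.
exact: (rcomp1 H1 HF).
Qed.

Lemma rcomp_add n F G : rcomp n F -> rcomp n G -> rcomp n (fun v => F v + G v).
Proof.
move=> HF HG; suff H : rcomp 2 (fun w => nth 0 w 0 + nth 0 w 1) by exact: rcomp2 H HF HG.
have := rcomp_loop (n:=2) (I := fun v => nth 0 v 1) (S := fun v => (nth 0 v 1).+1)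
  (C := fun v => nth 0 v 0) (rcomp_proj _ _) (rcomp_succ (rcomp_proj _ _)) (rcomp_proj _ _).
by rcomp_conv => v _; elim: (nth 0 v 0) => //= k ->; rewrite addSn.
Qed.

Lemma rcomp_mul n F G : rcomp n F -> rcomp n G -> rcomp n (fun v => F v * G v).
Proof.
move=> HF HG; suff H : rcomp 2 (fun w => nth 0 w 0 * nth 0 w 1) by exact: rcomp2 H HF HG.
have := rcomp_loop (n:=2) (I := fun v => 0) (S := fun v => nth 0 v 1 + nth 0 v 3)
  (C := fun v => nth 0 v 0) (rcomp_const _ _)
  (rcomp_add (rcomp_proj _ _) (rcomp_proj _ _)) (rcomp_proj _ _).
by rcomp_conv => v _; elim: (nth 0 v 0) => //= k ->; rewrite mulSn addnC.
Qed.

Lemma rcomp_pred n F : rcomp n F -> rcomp n (fun v => (F v).-1).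
Proof.
move=> HF; suff H : rcomp 1 (fun w => (nth 0 w 0).-1) by exact: rcomp1 H HF.
have := rcomp_loop (n:=1) (I := fun v => 0) (S := fun v => nth 0 v 0)
  (C := fun v => nth 0 v 0) (rcomp_const _ _) (rcomp_proj _ _) (rcomp_proj _ _).
by rcomp_conv => v _; case: (nth 0 v 0).
Qed.

Lemma rcomp_sub n F G : rcomp n F -> rcomp n G -> rcomp n (fun v => F v - G v).
Proof.
move=> HF HG; suff H : rcomp 2 (fun w => nth 0 w 0 - nth 0 w 1) by exact: rcomp2 H HF HG.
have := rcomp_loop (n:=2) (I := fun v => nth 0 v 0) (S := fun v => (nth 0 v 1).-1)
  (C := fun v => nth 0 v 1) (rcomp_proj _ _) (rcomp_pred (rcomp_proj _ _)) (rcomp_proj _ _).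
by rcomp_conv => v _; elim: (nth 0 v 1) => /= [|k ->]; rewrite ?subn0 ?subnS.
Qed.

Lemma rcomp_eq0 n F : rcomp n F -> rcomp n (fun v => nat_of_bool (F v == 0)).
Proof.
move=> HF; suff H : rcomp 1 (fun w => nat_of_bool (nth 0 w 0 == 0)) by exact: rcomp1 H HF.
have := rcomp_loop (n:=1) (I := fun v => 1) (S := fun v => 0)
  (C := fun v => nth 0 v 0) (rcomp_const _ _) (rcomp_const _ _) (rcomp_proj _ _).
by rcomp_conv => v _; case: (nth 0 v 0).
Qed.

Lemma rcomp_eqn n F G : rcomp n F -> rcomp n G -> rcomp n (fun v => nat_of_bool (F v == G v)).
Proof.
move=> HF HG; have := rcomp_eq0 (rcomp_add (rcomp_sub HF HG) (rcomp_sub HG HF)).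
by rcomp_conv => v _; congr nat_of_bool; apply/eqP; case: eqP => E; lia.
Qed.

Lemma rcomp_leq n F G : rcomp n F -> rcomp n G -> rcomp n (fun v => nat_of_bool (F v <= G v)).
Proof.
move=> HF HG; have := rcomp_eq0 (rcomp_sub HF HG).
by rcomp_conv => v _; rewrite subn_eq0.
Qed.

Lemma rcomp_if0 n B F G : rcomp n B -> rcomp n F -> rcomp n G ->
  rcomp n (fun v => if B v == 0 then G v else F v).
Proof.
move=> HB HF HG.
have := rcomp_add (rcomp_mul (rcomp_eq0 HB) HG) (rcomp_mul (rcomp_eq0 (rcomp_eq0 HB)) HF).
by rcomp_conv => v _; case: (B v) => [|b] /=; rewrite ?mul1n ?mul0n ?addn0 ?add0n.
Qed.

Lemma rcomp_if n (b : seq nat -> bool) F G : rcomp n (fun v => nat_of_bool (b v)) ->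
  rcomp n F -> rcomp n G -> rcomp n (fun v => if b v then F v else G v).
Proof.
move=> HB HF HG; have := rcomp_if0 HB HF HG.
by rcomp_conv => v _; case: (b v).
Qed.

Lemma rcomp_odd n F : rcomp n F -> rcomp n (fun v => nat_of_bool (odd (F v))).
Proof.
move=> HF; suff H : rcomp 1 (fun w => nat_of_bool (odd (nth 0 w 0))) by exact: rcomp1 H HF.
have := rcomp_loop (n:=1) (I := fun v => 0) (S := fun v => nat_of_bool (nth 0 v 1 == 0))
  (C := fun v => nth 0 v 0) (rcomp_const _ _) (rcomp_eq0 (rcomp_proj _ _)) (rcomp_proj _ _).
by rcomp_conv => v _; elim: (nth 0 v 0) => //= k ->; case: (odd k).
Qed.

Lemma rcomp_half n F : rcomp n F -> rcomp n (fun v => (F v)./2).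
Proof.
move=> HF; suff H : rcomp 1 (fun w => (nth 0 w 0)./2) by exact: rcomp1 H HF.
have := rcomp_loop (n:=1) (I := fun v => 0)
  (S := fun v => nth 0 v 1 + nat_of_bool (odd (nth 0 v 0)))
  (C := fun v => nth 0 v 0) (rcomp_const _ _)
  (rcomp_add (rcomp_proj _ _) (rcomp_odd (rcomp_proj _ _))) (rcomp_proj _ _).
by rcomp_conv => v _; elim: (nth 0 v 0) => //= k ->; rewrite uphalf_half addnC.
Qed.

Fixpoint tri s := if s is s'.+1 then tri s' + s else 0.

Lemma tri_double s : (tri s).*2 = s * s.+1.
Proof. by elim: s => //= s IH; rewrite doubleD IH; lia. Qed.

Lemma cpairE a b : cpair a b = tri (a + b) + b.
Proof. by rewrite /cpair -tri_double doubleK. Qed.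

Lemma leq_tri s s' : s <= s' -> tri s <= tri s'.
Proof. by move=> H; rewrite -leq_double !tri_double; nia. Qed.

Lemma leq_tri_self s : s <= tri s.
Proof. by rewrite -leq_double tri_double; nia. Qed.

Lemma leq_cpairl a b : a <= cpair a b.
Proof. by rewrite cpairE; have := leq_tri_self (a + b); lia. Qed.

Lemma leq_cpairr a b : b <= cpair a b.
Proof. by rewrite cpairE; lia. Qed.

Lemma rcomp_tri n F : rcomp n F -> rcomp n (fun v => tri (F v)).
Proof.
move=> HF; have := rcomp_half (rcomp_mul HF (rcomp_succ HF)).
by rcomp_conv => v _; rewrite -tri_double doubleK.
Qed.

Lemma rcomp_cpair n F G : rcomp n F -> rcomp n G -> rcomp n (fun v => cpair (F v) (G v)).
Proof.
move=> HF HG; have := rcomp_add (rcomp_tri (rcomp_add HF HG)) HG.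
by rcomp_conv => v _; rewrite cpairE.
Qed.

(* [count_tri c k] counts the [1 <= i <= k] with [tri i <= c]; for [k := c] this recovers
   the diagonal [a + b] of [c = cpair a b] by a bounded, hence primitive recursive, search. *)
Fixpoint count_tri (c k : nat) :=
  if k is k'.+1 then count_tri c k' + nat_of_bool (tri k'.+1 <= c) else 0.
Definition pdiag c := count_tri c c.
Definition psnd c := c - tri (pdiag c).
Definition pfst c := pdiag c - psnd c.

Lemma count_tri_cpair s b k : b <= s -> count_tri (tri s + b) k = minn k s.
Proof.
move=> Hb; elim: k => [|k IH] /=; first by rewrite min0n.
have -> : (tri k.+1 <= tri s + b) = (k.+1 <= s).
  case: (leqP k.+1 s) => Hk; first exact: leq_trans (leq_tri Hk) (leq_addr _ _).
  by apply/negbTE; rewrite -ltnNge; apply: leq_trans (leq_tri Hk); rewrite /= ltn_add2l ltnS.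
by rewrite IH; case: (leqP k.+1 s) => /= Hk; lia.
Qed.

Lemma pdiag_cpair a b : pdiag (cpair a b) = a + b.
Proof.
rewrite /pdiag cpairE count_tri_cpair ?leq_addl //; apply/minn_idPr.
exact: leq_trans (leq_tri_self _) (leq_addr _ _).
Qed.

Lemma psnd_cpair a b : psnd (cpair a b) = b.
Proof. by rewrite /psnd pdiag_cpair cpairE addKn. Qed.

Lemma pfst_cpair a b : pfst (cpair a b) = a.
Proof. by rewrite /pfst pdiag_cpair psnd_cpair addnK. Qed.

Lemma cpair_inj a b a' b' : cpair a b = cpair a' b' -> a = a' /\ b = b'.
Proof.
move=> E; split; first by rewrite -(pfst_cpair a b) E pfst_cpair.
by rewrite -(psnd_cpair a b) E psnd_cpair.
Qed.

Lemma rcomp_pdiag n F : rcomp n F -> rcomp n (fun v => pdiag (F v)).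
Proof.
move=> HF; suff H : rcomp 1 (fun w => pdiag (nth 0 w 0)) by exact: rcomp1 H HF.
have := rcomp_loop (n:=1) (I := fun v => 0)
  (S := fun v => nth 0 v 1 + nat_of_bool (tri (nth 0 v 0).+1 <= nth 0 v 2))
  (C := fun v => nth 0 v 0) (rcomp_const _ _)
  (rcomp_add (rcomp_proj _ _) (rcomp_leq (rcomp_tri (rcomp_succ (rcomp_proj _ _))) (rcomp_proj _ _)))
  (rcomp_proj _ _).
rcomp_conv => v _; rewrite /pdiag; move: {1 3}(nth 0 v 0) => k.
by elim: k => //= k ->.
Qed.

Lemma rcomp_psnd n F : rcomp n F -> rcomp n (fun v => psnd (F v)).
Proof. by move=> HF; apply: rcomp_sub HF (rcomp_tri (rcomp_pdiag HF)). Qed.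

Lemma rcomp_pfst n F : rcomp n F -> rcomp n (fun v => pfst (F v)).
Proof. by move=> HF; apply: rcomp_sub (rcomp_pdiag HF) (rcomp_psnd HF). Qed.

Definition lcons x l := (cpair x l).+1.
Definition lhead l := pfst l.-1.
Definition ltail l := psnd l.-1.
Fixpoint lcode (s : seq nat) := if s is x :: s' then lcons x (lcode s') else 0.
Definition lnth l i := lhead (iter i ltail l).

Lemma lhead_cons x l : lhead (lcons x l) = x.
Proof. by rewrite /lhead /lcons /= pfst_cpair. Qed.

Lemma ltail_cons x l : ltail (lcons x l) = l.
Proof. by rewrite /ltail /lcons /= psnd_cpair. Qed.

Lemma lnth_cons x l i : lnth (lcons x l) i = if i is i'.+1 then lnth l i' else x.
Proof. by case: i => [|i]; rewrite /lnth ?iterSr ?ltail_cons ?lhead_cons. Qed.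

Lemma lnth_lcode s i : lnth (lcode s) i = nth 0 s i.
Proof.
have iter_ltail0 j : iter j ltail 0 = 0 by elim: j => //= j ->.
by elim: s i => [|x s IH] [|i] //=; rewrite ?lnth_cons // /lnth iter_ltail0.
Qed.

Lemma rcomp_lcons n F G : rcomp n F -> rcomp n G -> rcomp n (fun v => lcons (F v) (G v)).
Proof. by move=> HF HG; apply: rcomp_succ (rcomp_cpair HF HG). Qed.

Lemma rcomp_lnth n L I : rcomp n L -> rcomp n I -> rcomp n (fun v => lnth (L v) (I v)).
Proof.
move=> HL HI; apply: rcomp_pfst; apply: rcomp_pred.
have := rcomp_loop (I := L) (S := fun w => ltail (nth 0 w 1)) HL
  (rcomp_psnd (rcomp_pred (rcomp_proj _ _))) HI.
by rcomp_conv => v _; elim: (I v) => //= k ->.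
Qed.

(* Integers coded by pairs [cpair a b] standing for [a - b], rationals by pairs
   [cpair x y] of such codes standing for [x / y]. *)
Definition intpair c := if odd c then cpair 0 (c./2).+1 else cpair c./2 0.
Definition iadd x y := cpair (pfst x + pfst y) (psnd x + psnd y).
Definition imul x y :=
  cpair (pfst x * pfst y + psnd x * psnd y) (pfst x * psnd y + psnd x * pfst y).
Definition radd r s :=
  cpair (iadd (imul (pfst r) (psnd s)) (imul (pfst s) (psnd r))) (imul (psnd r) (psnd s)).
Definition rmul r s := cpair (imul (pfst r) (pfst s)) (imul (psnd r) (psnd s)).

Definition intv (x : nat) : int := (Posz (pfst x) - Posz (psnd x))%R.
Definition ratv (r : nat) : rat := ((intv (pfst r))%:~R / (intv (psnd r))%:~R)%R.

Lemma intv_cpair a b : intv (cpair a b) = (Posz a - Posz b)%R.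
Proof. by rewrite /intv pfst_cpair psnd_cpair. Qed.

Lemma intv_intpair z : intv (intpair (code_int z)) = z.
Proof.
case: z => n; rewrite /intpair /= odd_double /=.
  by rewrite doubleK intv_cpair subr0.
by rewrite uphalf_double intv_cpair NegzE; lia.
Qed.

Lemma intv_iadd x y : intv (iadd x y) = (intv x + intv y)%R.
Proof. by rewrite /iadd intv_cpair /intv; lia. Qed.

Lemma intv_imul x y : intv (imul x y) = (intv x * intv y)%R.
Proof. by rewrite /imul intv_cpair /intv !PoszD !PoszM; ring. Qed.

Lemma ratv_radd r s : intv (psnd r) != 0%R -> intv (psnd s) != 0%R ->
  intv (psnd (radd r s)) != 0%R /\ ratv (radd r s) = (ratv r + ratv s)%R.
Proof.
rewrite /radd /ratv !pfst_cpair !psnd_cpair intv_iadd !intv_imul.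
move: (intv (pfst r)) (intv (psnd r)) (intv (pfst s)) (intv (psnd s)) => a b c d Hb Hd.
split; first by rewrite mulf_neq0.
by rewrite !intrD !intrM; field; rewrite !intr_eq0 Hb Hd.
Qed.

Lemma ratv_rmul r s : intv (psnd r) != 0%R -> intv (psnd s) != 0%R ->
  intv (psnd (rmul r s)) != 0%R /\ ratv (rmul r s) = (ratv r * ratv s)%R.
Proof.
rewrite /rmul /ratv !pfst_cpair !psnd_cpair !intv_imul.
move: (intv (pfst r)) (intv (psnd r)) (intv (pfst s)) (intv (psnd s)) => a b c d Hb Hd.
split; first by rewrite mulf_neq0.
by rewrite !intrM; field; rewrite !intr_eq0 Hb Hd.
Qed.

Lemma ratv_eq0 r : intv (psnd r) != 0%R -> (ratv r == 0%R) = (pfst (pfst r) == psnd (pfst r)).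
Proof.
move=> H; rewrite /ratv mulf_eq0 invr_eq0 !intr_eq0 (negbTE H) orbF /intv subr_eq0.
by apply/eqP/eqP => [[]|->].
Qed.

Lemma rcomp_intpair n F : rcomp n F -> rcomp n (fun v => intpair (F v)).
Proof.
move=> HF; apply: rcomp_if (rcomp_odd HF) _ _.
  exact: rcomp_cpair (rcomp_const _ _) (rcomp_succ (rcomp_half HF)).
exact: rcomp_cpair (rcomp_half HF) (rcomp_const _ _).
Qed.

Lemma rcomp_iadd n F G : rcomp n F -> rcomp n G -> rcomp n (fun v => iadd (F v) (G v)).
Proof.
move=> HF HG; apply: rcomp_cpair.
  exact: rcomp_add (rcomp_pfst HF) (rcomp_pfst HG).
exact: rcomp_add (rcomp_psnd HF) (rcomp_psnd HG).
Qed.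

Lemma rcomp_imul n F G : rcomp n F -> rcomp n G -> rcomp n (fun v => imul (F v) (G v)).
Proof.
move=> HF HG; apply: rcomp_cpair.
  exact: rcomp_add (rcomp_mul (rcomp_pfst HF) (rcomp_pfst HG))
                   (rcomp_mul (rcomp_psnd HF) (rcomp_psnd HG)).
exact: rcomp_add (rcomp_mul (rcomp_pfst HF) (rcomp_psnd HG))
                 (rcomp_mul (rcomp_psnd HF) (rcomp_pfst HG)).
Qed.

Lemma rcomp_radd n F G : rcomp n F -> rcomp n G -> rcomp n (fun v => radd (F v) (G v)).
Proof.
move=> HF HG; apply: rcomp_cpair.
  exact: rcomp_iadd (rcomp_imul (rcomp_pfst HF) (rcomp_psnd HG))
                    (rcomp_imul (rcomp_pfst HG) (rcomp_psnd HF)).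
exact: rcomp_imul (rcomp_psnd HF) (rcomp_psnd HG).
Qed.

Lemma rcomp_rmul n F G : rcomp n F -> rcomp n G -> rcomp n (fun v => rmul (F v) (G v)).
Proof.
move=> HF HG; apply: rcomp_cpair.
  exact: rcomp_imul (rcomp_pfst HF) (rcomp_pfst HG).
exact: rcomp_imul (rcomp_psnd HF) (rcomp_psnd HG).
Qed.

(* [mu_search q k] scans [q 0, ..., q k.-1], where [q m] is a clocked value: it returns
   [n.+2] if [q n = 1] is the first value below 2, [1] if the first such value is 0
   (a divergent step), and [0] if there is none. *)
Fixpoint mu_search (q : nat -> nat) (k : nat) : nat :=
  if k is k'.+1 then
    let st := mu_search q k' in
    if st != 0 then st else if q k' == 0 then 1 else if q k' == 1 then k'.+2 else 0
  else 0.

Definition prim_clock (cf cg : seq nat -> nat) (v : seq nat) : nat -> nat :=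
  fix h k := if k is k'.+1 then (if h k' is r.+1 then cg (k' :: r :: v) else 0) else cf v.

(* Step-bounded evaluation: [clock f t v] is [y.+1] when [f] halts on [v] with output [y]
   and every unbounded search it performs succeeds below [t]; it is [0] otherwise. *)
Fixpoint clock (f : recf) (t : nat) (v : seq nat) {struct f} : nat :=
  match f with
  | RZero => 1
  | RSucc => (head 0 v).+2
  | RProj i => (nth 0 v i).+1
  | RComp f gs => let ws := map (fun g => clock g t v) gs in
                  if all (fun w => 0 < w) ws then clock f t (map predn ws) else 0
  | RPrim f g => if v is n :: v' then prim_clock (clock f t) (clock g t) v' n else 0
  | RMu f => (mu_search (fun n => clock f t (n :: v)) t).-1
  end.

Section RecfNestedInd.
Variable P : recf -> Prop.
Hypothesis HZ : P RZero.
Hypothesis HS : P RSucc.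
Hypothesis HP : forall i, P (RProj i).
Hypothesis HC : forall f gs, P f -> (forall g, List.In g gs -> P g) -> P (RComp f gs).
Hypothesis HPr : forall f g, P f -> P g -> P (RPrim f g).
Hypothesis HM : forall f, P f -> P (RMu f).

Fixpoint recf_nested_ind f : P f :=
  match f with
  | RZero => HZ | RSucc => HS | RProj i => HP i
  | RComp f gs => HC (recf_nested_ind f)
      ((fix aux gs : forall g, List.In g gs -> P g :=
        match gs with
        | [::] => fun g H => False_ind _ H
        | g0 :: gs' => fun g H => match H with
                   | or_introl E => eq_ind g0 P (recf_nested_ind g0) g E
                   | or_intror H' => aux gs' g H' end
        end) gs)
  | RPrim f g => HPr (recf_nested_ind f) (recf_nested_ind g)
  | RMu f => HM (recf_nested_ind f)
  end.
End RecfNestedInd.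

Lemma mu_search0 q k : mu_search q k = 0 <-> forall m, m < k -> 2 <= q m.
Proof.
elim: k => [|k IH] //=; split.
  case: eqP => [/IH Hk|//]; case: eqP => // Hq0; case: eqP => // Hq1 _ m.
  rewrite ltnS leq_eqVlt => /orP[/eqP->|]; last exact: Hk.
  by case: (q k) Hq0 Hq1 => [|[|]].
move=> Hm; have -> /= : mu_search q k = 0 by apply/IH => m Hmk; apply: Hm; lia.
by have := Hm k (ltnSn k); case: (q k) => [|[|]].
Qed.

Lemma mu_search_sound q k n : mu_search q k = n.+2 -> q n = 1 /\ forall m, m < n -> 2 <= q m.
Proof.
elim: k => [|k IH] //=.
case: eqP => [E|NE] /=; last by move=> H; apply: IH; rewrite -H; case: (mu_search q k) NE.
by case: eqP => // _; case: eqP => // H1 [<-]; split => //; apply/mu_search0.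
Qed.

Lemma mu_search_complete q k n : (forall m, m < n -> 2 <= q m) -> q n = 1 -> n < k ->
  mu_search q k = n.+2.
Proof.
move=> Hm Hn; elim: k => [|k IH] // Hk /=.
case: (ltngtP n k) => Hnk; [by rewrite IH | lia | subst k].
have -> : mu_search q n = 0 by apply/mu_search0.
by rewrite /= Hn.
Qed.

Lemma clock_sound f : forall t v y, clock f t v = y.+1 -> eval f v y.
Proof.
elim/recf_nested_ind: f.
- by move=> t v y [<-]; constructor.
- by move=> t v y [<-]; constructor.
- by move=> i t v y [<-]; constructor.
- move=> f gs IHf IHgs t v y /=; case: ifP => // Hall H.
  apply: eComp (IHf _ _ _ H).
  elim: gs IHgs Hall {H} => [|g gs IH] IHgs /=; first by constructor.
  move=> /andP[Hg Ha]; constructor.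
    by apply: (IHgs g (or_introl erefl) t); rewrite prednK.
  by apply: IH => // g' Hg'; apply: IHgs; right.
- move=> f g IHf IHg t [|n v'] y //=.
  elim: n y => [|n IHn] y /= H; first by constructor; apply: (IHf t).
  move: H; case E: (prim_clock _ _ v' n) => [|r] // H.
  exact: ePrimS (IHn r E) (IHg _ _ _ H).
- move=> f IHf t v y /= H.
  have [Hy Hm] : clock f t (y :: v) = 1 /\ forall m, m < y -> 2 <= clock f t (m :: v).
    apply: (@mu_search_sound _ t).
    by move: H; case: (mu_search _ t) => [|[|]] //= ? [->].
  constructor; first exact: (IHf t).
  move=> m /Hm; case E: (clock f t (m :: v)) => [|[|k]] // _.
  by exists k; apply: (IHf t).
Qed.

Lemma eventually_all n (P : nat -> nat -> Prop) :
  (forall m, m < n -> exists t0, forall t, t0 <= t -> P m t) ->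
  exists t0, forall m, m < n -> forall t, t0 <= t -> P m t.
Proof.
elim: n => [|n IH] H; first by exists 0.
have [t1 H1] : exists t0, forall m, m < n -> forall t, t0 <= t -> P m t.
  by apply: IH => m Hm; apply: H; lia.
have [t2 H2] := H n (ltnSn n).
exists (maxn t1 t2) => m; rewrite ltnS leq_eqVlt => /orP[/eqP->|Hm] t Ht.
  by apply: H2; lia.
by apply: H1 => //; lia.
Qed.

Lemma clock_complete f : forall v y, eval f v y ->
  exists t0, forall t, t0 <= t -> clock f t v = y.+1.
Proof.
elim/recf_nested_ind: f.
- by move=> v y H; inversion H; exists 0.
- by move=> v y H; inversion H; exists 0.
- by move=> i v y H; inversion H; exists 0.
- move=> f gs IHf IHgs v y H; inversion H; subst.
  have [t2 Ht2] : exists t0, forall t, t0 <= t ->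
      map (fun g => clock g t v) gs = map succn ws.
    elim: gs ws IHgs H2 {H IHf H5} => [|g gs IH] ws IHgs Hs; inversion Hs; subst.
      by exists 0.
    have [ta Ha] := IHgs g (or_introl erefl) _ _ H1.
    have [tb Hb] := IH ws0 (fun g' Hg' => IHgs g' (or_intror Hg')) H4.
    by exists (maxn ta tb) => t Ht /=; rewrite Ha ?Hb //; lia.
  have [t1 Ht1] := IHf _ _ H5.
  exists (maxn t1 t2) => t Ht /=; rewrite Ht2; last by lia.
  have -> : all (fun w => 0 < w) (map succn ws) by rewrite all_map; apply/allP.
  by rewrite -map_comp map_id_in //; apply: Ht1; lia.
- move=> f g IHf IHg [|n v] y H; first by inversion H.
  elim: n y H => [|n IHn] y H; inversion H; subst.
    by have [t1 Ht1] := IHf _ _ H4; exists t1 => t Ht /=; rewrite Ht1.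
  have [t1 Ht1] := IHn _ H5.
  have [t2 Ht2] := IHg _ _ H6.
  exists (maxn t1 t2) => t Ht /=.
  by have /= -> := Ht1 t; [apply: Ht2 | ]; lia.
- move=> f IHf v n H; inversion H; subst.
  have [t1 Ht1] := IHf _ _ H1.
  have [t2 Ht2] : exists t0, forall m, m < n -> forall t, t0 <= t -> 2 <= clock f t (m :: v).
    apply: eventually_all => m /H2 [k /IHf [t0 Ht0]].
    by exists t0 => t Ht; rewrite Ht0.
  exists (maxn (maxn t1 t2) n.+1) => t Ht /=.
  rewrite (@mu_search_complete _ _ n) //; last by lia.
    by move=> m Hm; apply: Ht2 => //; lia.
  by apply: Ht1; lia.
Qed.

Lemma evalP_clock f v : (exists y, eval f v y) <-> exists t, clock f t v != 0.
Proof.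
split=> [[y /clock_complete [t Ht]] | [t]]; first by exists t; rewrite Ht.
by case E: (clock f t v) => [|y] // _; exists y; apply: clock_sound E.
Qed.

Definition clockv f (tv : seq nat) := clock f (head 0 tv) (behead tv).

Lemma rcomp_all_pred n Gs : rcomp_all n Gs -> rcomp_all n (map (fun G v => (G v).-1) Gs).
Proof. by elim: Gs => //= G Gs IH [H1 H2]; split; [exact: rcomp_pred|exact: IH]. Qed.

Lemma rcomp_allpos n Gs : rcomp_all n Gs ->
  rcomp n (fun v => nat_of_bool (all (fun w => 0 < w) (map (fun G => G v) Gs))).
Proof.
elim: Gs => [|G Gs IH] /=; first by move=> _; apply: rcomp_const.
move=> [HG HGs]; have := rcomp_mul (rcomp_leq (rcomp_const n 1) HG) (IH HGs).
by rcomp_conv => v _; case: (0 < G v); rewrite /= ?mul1n ?mul0n.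
Qed.

Lemma rcomp_clock_comp f gs : (forall m, rcomp m.+1 (clockv f)) ->
    (forall g, List.In g gs -> forall m, rcomp m.+1 (clockv g)) ->
  forall m, rcomp m.+1 (clockv (RComp f gs)).
Proof.
move=> IHf IHgs m.
have HGs : rcomp_all m.+1 (map clockv gs).
  elim: gs IHgs {IHf} => //= g gs IH IHgs; split; first exact: IHgs g (or_introl erefl) m.
  by apply: IH => g' Hg'; apply: IHgs; right.
have := @rcomp_compose _ _ _
  ((fun tv => nth 0 tv 0) :: map (fun G v => (G v).-1) (map clockv gs)) (IHf (size gs)).
rewrite /= !size_map => /(_ m.+1 erefl (conj (rcomp_proj _ _) (rcomp_all_pred HGs))) HA.
have := rcomp_if (rcomp_allpos HGs) HA (rcomp_const _ 0).
by rcomp_conv => [[|t v]] _; rewrite /clockv /= -!map_comp.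
Qed.

Lemma rcomp_clock_prim f g : (forall m, rcomp m.+1 (clockv f)) ->
    (forall m, rcomp m.+1 (clockv g)) ->
  forall m, rcomp m.+1 (clockv (RPrim f g)).
Proof.
move=> IHf IHg [|m].
  by have := rcomp_const 1 0; rcomp_conv => [[|t [|]]].
have := @rcomp_compose _ m.+2 _ ((fun tv => nth 0 tv 0) :: projs_from 2 m) (IHf m).
rewrite /= size_projs_from => /(_ erefl (conj (rcomp_proj _ _) (rcomp_all_projs_from _ _ _))) HI.
have := @rcomp_compose _ m.+4 _ ((fun w => nth 0 w 2) :: (fun w => nth 0 w 0) ::
    (fun w => (nth 0 w 1).-1) :: projs_from 4 m) (IHg m.+2).
rewrite /= size_projs_from => /(_ erefl (conj (rcomp_proj _ _) (conj (rcomp_proj _ _)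
    (conj (rcomp_pred (rcomp_proj _ _)) (rcomp_all_projs_from _ _ _))))) HG.
have := rcomp_loop HI (rcomp_if0 (rcomp_proj _ 1) HG (rcomp_const _ 0)) (rcomp_proj _ 1).
rcomp_conv => [[|t [|n v]]] // [Hv]; rewrite /clockv /=.
have Hsz : size [:: t, n & v] = 2 + m by rewrite /= Hv.
move: {1 3}n; elim=> [|k IH] /=; first by rewrite map_projs_from //= drop0.
by rewrite IH; case: (prim_clock _ _ v k) => [|r] //=; rewrite map_projs_from /= ?drop0 ?Hv.
Qed.

Lemma rcomp_clock_mu f : (forall m, rcomp m.+1 (clockv f)) ->
  forall m, rcomp m.+1 (clockv (RMu f)).
Proof.
move=> IHf m.
have := @rcomp_compose _ m.+3 _ ((fun w => nth 0 w 2) :: (fun w => nth 0 w 0) :: projs_from 3 m)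
  (IHf m.+1).
rewrite /= size_projs_from => /(_ erefl (conj (rcomp_proj _ _) (conj (rcomp_proj _ _)
    (rcomp_all_projs_from _ _ _)))) HQ.
have HS := rcomp_if0 (rcomp_proj _ 1) (rcomp_proj _ 1)
  (rcomp_if0 HQ (rcomp_if (rcomp_eqn HQ (rcomp_const _ 1))
                          (rcomp_succ (rcomp_succ (rcomp_proj _ 0))) (rcomp_const _ 0))
             (rcomp_const _ 1)).
have := rcomp_pred (rcomp_loop (rcomp_const _ 0) HS (rcomp_proj _ 0)).
rcomp_conv => [[|t v]] // [Hv]; rewrite /clockv /=; congr predn.
move: {1 4}t; elim=> [|k IH] //=.
rewrite IH map_projs_from /=; last by lia.
by case: (mu_search _ k) => [|st] //=; rewrite drop0.
Qed.

Lemma rcomp_clock f m : rcomp m.+1 (clockv f).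
Proof.
elim/recf_nested_ind: f m.
- by move=> m; apply: rcomp_const.
- by move=> m; have := rcomp_succ (rcomp_succ (rcomp_proj m.+1 1)); rcomp_conv => [[|t [|x v]]].
- by move=> i m; have := rcomp_succ (rcomp_proj m.+1 i.+1); rcomp_conv => [[|t v]].
- exact: rcomp_clock_comp.
- exact: rcomp_clock_prim.
- exact: rcomp_clock_mu.
Qed.

Lemma div4_addn x r : r < 4 -> (4 * x + r)./2./2 = x.
Proof. by move=> H; rewrite -!divn2; lia. Qed.

Section CodeFold.
Variables (LV LC : nat -> nat -> nat) (OA OM : nat -> nat -> nat -> nat).

Fixpoint pfold (p : zpoly) prm : nat :=
  match p with
  | PVar i => LV i prm
  | PConst z => LC (code_int z) prm
  | PAdd p q => OA (pfold p prm) (pfold q prm) prm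
  | PMul p q => OM (pfold p prm) (pfold q prm) prm
  end.

(* [pfold] computed on codes by course-of-values recursion: [cfold_hist n prm] is the coded
   list [cfold (n-1) prm; ...; cfold 0 prm], and subterm codes are smaller than the code
   of the term. *)
Definition cfold_step (n h prm : nat) : nat :=
  let x := n./2./2 in let r := n - 4 * x in
  let va := lnth h (n.-1 - pfst x) in let vb := lnth h (n.-1 - psnd x) in
  if r == 0 then LV x prm else if r == 1 then LC x prm
  else if r == 2 then OA va vb prm else OM va vb prm.

Fixpoint cfold_hist (n prm : nat) : nat :=
  if n is n'.+1 then lcons (cfold_step n' (cfold_hist n' prm) prm) (cfold_hist n' prm) else 0.

Definition cfold c prm := lhead (cfold_hist c.+1 prm).

Lemma cfold_histE prm n j : j < n -> lnth (cfold_hist n prm) (n.-1 - j) = cfold j prm.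
Proof.
elim: n => [|n IH] //; rewrite ltnS leq_eqVlt => /orP[/eqP->|Hj] /=.
  by rewrite subnn lnth_cons /cfold /= lhead_cons.
have -> : n - j = (n.-1 - j).+1 by lia.
by rewrite lnth_cons IH.
Qed.

Lemma cfoldE c prm : cfold c prm = cfold_step c (cfold_hist c prm) prm.
Proof. by rewrite /cfold /= lhead_cons. Qed.

Lemma cfold_step_var i h prm : cfold_step (4 * i) h prm = LV i prm.
Proof. by rewrite /cfold_step -[4 * i]addn0 div4_addn // addn0 subnn. Qed.

Lemma cfold_step_const x h prm : cfold_step (4 * x).+1 h prm = LC x prm.
Proof. by rewrite /cfold_step -addn1 div4_addn // addKn. Qed.

Lemma cfold_step_add p q h prm : let n := code_zpoly (PAdd p q) in
  cfold_step n h prm = OA (lnth h (n.-1 - code_zpoly p)) (lnth h (n.-1 - code_zpoly q)) prm.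
Proof.
have -> : code_zpoly (PAdd p q) = 4 * cpair (code_zpoly p) (code_zpoly q) + 2.
  by rewrite addn2.
by rewrite /cfold_step div4_addn // pfst_cpair psnd_cpair addKn.
Qed.

Lemma cfold_step_mul p q h prm : let n := code_zpoly (PMul p q) in
  cfold_step n h prm = OM (lnth h (n.-1 - code_zpoly p)) (lnth h (n.-1 - code_zpoly q)) prm.
Proof.
have -> : code_zpoly (PMul p q) = 4 * cpair (code_zpoly p) (code_zpoly q) + 3.
  by rewrite addn3.
by rewrite /cfold_step div4_addn // pfst_cpair psnd_cpair addKn.
Qed.

Lemma cfold_code p prm : cfold (code_zpoly p) prm = pfold p prm.
Proof.
elim: p => [i|z|p IHp q IHq|p IHp q IHq]; rewrite cfoldE.
- exact: cfold_step_var.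
- exact: cfold_step_const.
all: rewrite ?cfold_step_add ?cfold_step_mul.
all: have := leq_cpairl (code_zpoly p) (code_zpoly q).
all: have := leq_cpairr (code_zpoly p) (code_zpoly q).
all: by move=> *; rewrite !cfold_histE ?IHp ?IHq //=; lia.
Qed.

Hypothesis rcomp_LV : forall n F G, rcomp n F -> rcomp n G -> rcomp n (fun v => LV (F v) (G v)).
Hypothesis rcomp_LC : forall n F G, rcomp n F -> rcomp n G -> rcomp n (fun v => LC (F v) (G v)).
Hypothesis rcomp_OA : forall n F G H, rcomp n F -> rcomp n G -> rcomp n H ->
  rcomp n (fun v => OA (F v) (G v) (H v)).
Hypothesis rcomp_OM : forall n F G H, rcomp n F -> rcomp n G -> rcomp n H ->
  rcomp n (fun v => OM (F v) (G v) (H v)).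

Lemma rcomp_cfold_step n N H P : rcomp n N -> rcomp n H -> rcomp n P ->
  rcomp n (fun v => cfold_step (N v) (H v) (P v)).
Proof.
move=> HN HH HP; rewrite /cfold_step.
have HX := rcomp_half (rcomp_half HN).
have HR := rcomp_sub HN (rcomp_mul (rcomp_const _ 4) HX).
have HA := rcomp_lnth HH (rcomp_sub (rcomp_pred HN) (rcomp_pfst HX)).
have HB := rcomp_lnth HH (rcomp_sub (rcomp_pred HN) (rcomp_psnd HX)).
apply: (rcomp_if0 HR _ (rcomp_LV HX HP)).
apply: (rcomp_if (rcomp_eqn HR (rcomp_const _ 1)) (rcomp_LC HX HP)).
exact: rcomp_if (rcomp_eqn HR (rcomp_const _ 2)) (rcomp_OA HA HB HP) (rcomp_OM HA HB HP).
Qed.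

Lemma rcomp_cfold n C P : rcomp n C -> rcomp n P -> rcomp n (fun v => cfold (C v) (P v)).
Proof.
move=> HC HP.
have Hhist : rcomp 2 (fun v => cfold_hist (nth 0 v 0) (nth 0 v 1)).
  have := rcomp_loop (n := 2) (I := fun _ => 0)
    (S := fun w => lcons (cfold_step (nth 0 w 0) (nth 0 w 1) (nth 0 w 3)) (nth 0 w 1))
    (C := fun v => nth 0 v 0) (rcomp_const _ _)
    (rcomp_lcons (rcomp_cfold_step (rcomp_proj _ _) (rcomp_proj _ _) (rcomp_proj _ _))
                 (rcomp_proj _ _))
    (rcomp_proj _ _).
  by rcomp_conv => v _; move: {1 2}(nth 0 v 0); elim=> //= k ->.
exact: rcomp_pfst (rcomp_pred (rcomp2 Hhist (rcomp_succ HC) HP)).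
Qed.
End CodeFold.

Lemma code_int_inj : injective code_int.
Proof. by case=> n [] m /=; rewrite -!mul2n => E; f_equal; lia. Qed.

Definition zpoly_tag p := match p with PVar _ => 0 | PConst _ => 1 | PAdd _ _ => 2 | PMul _ _ => 3 end.
Definition zpoly_payload p := match p with
  | PVar i => i | PConst z => code_int z
  | PAdd p q | PMul p q => cpair (code_zpoly p) (code_zpoly q) end.

Lemma code_zpoly_split p : code_zpoly p = 4 * zpoly_payload p + zpoly_tag p.
Proof. by case: p => *; rewrite /= ?addn0 ?addn1 ?addn2 ?addn3. Qed.

Lemma code_zpoly_eq p q : code_zpoly p = code_zpoly q ->
  zpoly_payload p = zpoly_payload q /\ zpoly_tag p = zpoly_tag q.
Proof.
rewrite !code_zpoly_split.
have : zpoly_tag p < 4 by case: p.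
have : zpoly_tag q < 4 by case: q.
lia.
Qed.

Lemma code_zpoly_inj : injective code_zpoly.
Proof.
elim=> [i|z|p1 IH1 p2 IH2|p1 IH1 p2 IH2] q /code_zpoly_eq [];
  case: q => [j|w|q1 q2|q1 q2] //= Ep _.
- by rewrite Ep.
- by rewrite (code_int_inj Ep).
- by case: (cpair_inj Ep) => /IH1 -> /IH2 ->.
- by case: (cpair_inj Ep) => /IH1 -> /IH2 ->.
Qed.

Lemma code_dioph_inj : injective code_dioph.
Proof. by case=> n p [n' p'] /cpair_inj [/= -> /code_zpoly_inj ->]. Qed.

Fixpoint shiftp (p : zpoly) : zpoly :=
  match p with
  | PVar i => PVar i.+1
  | PConst z => PConst z
  | PAdd p q => PAdd (shiftp p) (shiftp q)
  | PMul p q => PMul (shiftp p) (shiftp q)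
  end.

Lemma zpeval_shiftp p y x : zpeval (shiftp p) (y :: x) = zpeval p x.
Proof. by elim: p => //= p -> q ->. Qed.

(* [dshift d] is [d] with a fresh dummy variable in front: its solutions in [R] are the
   [y :: x] with [y] in [R] and [x] a solution of [d], so there are infinitely many as soon
   as there is one. *)
Definition dshift d := Dioph (dioph_nv d).+1 (shiftp (dioph_poly d)).

Lemma finitely_many_solutions_dshift (R : rat -> Prop) d : infinite_set R ->
  finitely_many_solutions_in R (dshift d) <-> ~ has_solution_in R d.
Proof.
move=> Hinf; split.
  move=> [L HL] [x [Hs [Hx Hz]]]; apply: Hinf; exists (map (head 0%R) L) => q Rq.
  apply/mapP; exists (q :: x) => //; apply: HL; split; first by rewrite /= Hs.
  split; last by rewrite /= zpeval_shiftp.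
  by move=> q'; rewrite in_cons => /orP [/eqP ->|/Hx].
move=> H; exists [::] => -[|y x] [Hs [Hx Hz]] //; exfalso; apply: H; exists x.
split; first by case: Hs.
split; first by move=> q Hq; apply: Hx; rewrite in_cons Hq orbT.
by rewrite /= zpeval_shiftp in Hz.
Qed.

Lemma rcomp_code_dshift : exists S, rcomp 1 S /\ forall d, S [:: code_dioph d] = code_dioph (dshift d).
Proof.
pose S v := cpair (pfst (nth 0 v 0)).+1
  (cfold (fun i _ => 4 * i.+1) (fun x _ => (4 * x).+1)
         (fun a b _ => (4 * cpair a b).+2) (fun a b _ => (4 * cpair a b).+3) (psnd (nth 0 v 0)) 0).
exists S; split.
  apply: rcomp_cpair; first exact: rcomp_succ (rcomp_pfst (rcomp_proj _ _)).
  apply: rcomp_cfold (rcomp_psnd (rcomp_proj _ _)) (rcomp_const _ _).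
  - by move=> n F G HF _; apply: rcomp_mul (rcomp_const _ 4) (rcomp_succ HF).
  - by move=> n F G HF _; apply: rcomp_succ (rcomp_mul (rcomp_const _ 4) HF).
  - move=> n F G H HF HG _.
    exact: rcomp_succ (rcomp_succ (rcomp_mul (rcomp_const _ 4) (rcomp_cpair HF HG))).
  - move=> n F G H HF HG _.
    exact: rcomp_succ (rcomp_succ (rcomp_succ (rcomp_mul (rcomp_const _ 4) (rcomp_cpair HF HG)))).
move=> [n p]; rewrite /S /code_dioph /= pfst_cpair psnd_cpair cfold_code.
by congr cpair; elim: p => //= p -> q ->.
Qed.

Definition enum_tuple (r : nat -> rat) nv L := [seq r (lnth L i) | i <- iota 0 nv.+1].

Lemma enum_tuple_lcode r nv ks : size ks = nv.+1 -> enum_tuple r nv (lcode ks) = map r ks.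
Proof.
move=> Hks; rewrite /enum_tuple -[in RHS](mkseq_nth 0 ks) Hks /mkseq -map_comp.
by apply: eq_map => i; rewrite /= lnth_lcode.
Qed.

Lemma has_solution_in_enumP (R : rat -> Prop) (r : nat -> rat) d :
  (forall q, R q <-> exists k, q = r k) ->
  has_solution_in R d <-> exists L, zpeval (dioph_poly d) (enum_tuple r (dioph_nv d) L) = 0%R.
Proof.
move=> HR; split.
  move=> [x [Hs [Hx Hz]]].
  have [ks Eks] : exists ks, x = map r ks.
    elim: x {Hs Hz} Hx => [|q x IH] Hx; first by exists [::].
    have [k ->] : exists k, q = r k by apply/HR/Hx; rewrite in_cons eqxx.
    have [ks ->] : exists ks, x = map r ks.
      by apply: IH => q' Hq'; apply: Hx; rewrite in_cons Hq' orbT.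
    by exists (k :: ks).
  by subst x; exists (lcode ks); rewrite enum_tuple_lcode // -Hs size_map.
move=> [L HL]; exists (enum_tuple r (dioph_nv d) L); split.
  by rewrite size_map size_iota.
by split => // q /mapP [i _ ->]; apply/HR; exists (lnth L i).
Qed.

Definition qfrac (tau1 tau2 : nat -> int) (k : nat) : rat := ((tau1 k)%:~R / (tau2 k)%:~R)%R.

Section SolutionTest.
Variables (tau1 tau2 : nat -> int).
Hypothesis tau2_neq0 : forall k, tau2 k != 0%R.

(* Variables beyond the tuple read as [0 / 1], matching [zpeval]. *)
Definition code_var i env :=
  if i <= pfst env then
    cpair (intpair (code_int (tau1 (lnth (psnd env) i))))
          (intpair (code_int (tau2 (lnth (psnd env) i))))
  else cpair (cpair 0 0) (cpair 1 0).

Definition code_value p env :=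
  pfold code_var (fun x _ => cpair (intpair x) (cpair 1 0))
        (fun a b _ => radd a b) (fun a b _ => rmul a b) p env.

Lemma code_valueE nv L p :
  intv (psnd (code_value p (cpair nv L))) != 0%R /\
  ratv (code_value p (cpair nv L)) = zpeval p (enum_tuple (qfrac tau1 tau2) nv L).
Proof.
elim: p => [i|z|p [Hp Ep] q [Hq Eq]|p [Hp Ep] q [Hq Eq]]; rewrite /code_value;
  cbn [pfold zpeval].
- rewrite /code_var /ratv pfst_cpair psnd_cpair; case: leqP => Hi.
    rewrite !pfst_cpair !psnd_cpair !intv_intpair; split; first exact: tau2_neq0.
    by rewrite /enum_tuple (nth_map 0) ?size_iota ?ltnS // nth_iota ?ltnS.
  rewrite !pfst_cpair !psnd_cpair !intv_cpair subr0; split=> //.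
  by rewrite nth_default ?mul0r // size_map size_iota.
- rewrite /ratv !pfst_cpair !psnd_cpair intv_intpair intv_cpair subr0.
  by split; [|rewrite divr1].
- by have [-> E] := ratv_radd Hp Hq; rewrite E Ep Eq.
- by have [-> E] := ratv_rmul Hp Hq; rewrite E Ep Eq.
Qed.
End SolutionTest.

Lemma rcomp_computable_NZ tau : computable_NZ tau ->
  forall n F, rcomp n F -> rcomp n (fun v => code_int (tau (F v))).
Proof.
move=> [e He] n F HF; suff H : rcomp 1 (fun w => code_int (tau (nth 0 w 0))) by exact: rcomp1 H HF.
by exists e => -[|k []] //= _; apply: He.
Qed.

Lemma rcomp_solution_test tau1 tau2 :
  computable_NZ tau1 -> computable_NZ tau2 -> (forall k, tau2 k != 0%R) ->
  exists B : seq nat -> bool, rcomp 2 (fun v => nat_of_bool (B v)) /\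
    forall d L, B [:: L; code_dioph d] =
      (zpeval (dioph_poly d) (enum_tuple (qfrac tau1 tau2) (dioph_nv d) L) == 0%R).
Proof.
move=> /rcomp_computable_NZ Htau1 /rcomp_computable_NZ Htau2 tau2_neq0.
pose V v := cfold (code_var tau1 tau2) (fun x _ => cpair (intpair x) (cpair 1 0))
  (fun a b _ => radd a b) (fun a b _ => rmul a b)
  (psnd (nth 0 v 1)) (cpair (pfst (nth 0 v 1)) (nth 0 v 0)).
exists (fun v => pfst (pfst (V v)) == psnd (pfst (V v))); split.
  have HV : rcomp 2 V.
    apply: rcomp_cfold (rcomp_psnd (rcomp_proj _ _))
      (rcomp_cpair (rcomp_pfst (rcomp_proj _ _)) (rcomp_proj _ _)).
    - move=> n F G HF HG; rewrite /code_var.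
      apply: rcomp_if (rcomp_leq HF (rcomp_pfst HG)) _ (rcomp_const _ _).
      exact: rcomp_cpair (rcomp_intpair (Htau1 _ _ (rcomp_lnth (rcomp_psnd HG) HF)))
                         (rcomp_intpair (Htau2 _ _ (rcomp_lnth (rcomp_psnd HG) HF))).
    - by move=> n F G HF _; apply: rcomp_cpair (rcomp_intpair HF) (rcomp_const _ _).
    - by move=> n F G H HF HG _; apply: rcomp_radd.
    - by move=> n F G H HF HG _; apply: rcomp_rmul.
  exact: rcomp_eqn (rcomp_pfst (rcomp_pfst HV)) (rcomp_psnd (rcomp_pfst HV)).
move=> [nv p] L; rewrite /V /code_dioph /= pfst_cpair psnd_cpair cfold_code.
have [Hnz <-] := code_valueE tau1 tau2_neq0 nv L p.
by rewrite ratv_eq0.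
Qed.

Lemma re_dioph_preimage (Q : dioph -> Prop) (g : dioph -> dioph) (S : seq nat -> nat) :
  re_dioph Q -> rcomp 1 S -> (forall d, S [:: code_dioph d] = code_dioph (g d)) ->
  exists A : seq nat -> bool, rcomp 2 (fun v => nat_of_bool (A v)) /\
    forall d, Q (g d) <-> exists t, A [:: t; code_dioph d].
Proof.
move=> [e He] HS Sg.
exists (fun v => clock e (nth 0 v 0) [:: S [:: nth 0 v 1]] != 0); split.
  have := rcomp_eq0 (rcomp_eq0 (rcomp2 (rcomp_clock e 1) (rcomp_proj 2 0)
                                       (rcomp1 HS (rcomp_proj 2 1)))).
  by rcomp_conv => v _; case: (clock e _ _ == 0).
move=> d; rewrite /= Sg -evalP_clock He; split=> [Hg | [d' [/code_dioph_inj -> //]]].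
by exists (g d).
Qed.

Lemma eval_mu_min f v (P : pred nat) n :
    (forall m, eval f (m :: v) (nat_of_bool (~~ P m))) -> P n -> (forall m, P m -> n <= m) ->
  eval (RMu f) v n.
Proof.
move=> Hf Pn Hmin; constructor; first by have := Hf n; rewrite Pn.
move=> m Hm; exists 0; have := Hf m.
by case: (boolP (P m)) => // /Hmin; rewrite leqNgt Hm.
Qed.

Lemma decidable_by_witnesses T (code : T -> nat) (P : T -> Prop) (A B : seq nat -> bool) :
    rcomp 2 (fun v => nat_of_bool (A v)) -> rcomp 2 (fun v => nat_of_bool (B v)) ->
    (forall x, P x <-> exists s, B [:: s; code x]) ->
    (forall x, ~ P x <-> exists s, A [:: s; code x]) ->
  exists e, forall x, (P x -> eval e [:: code x] 1) /\ (~ P x -> eval e [:: code x] 0).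
Proof.
move=> HA HB HP HnP.
have [tf Htf] := rcomp_eq0 (rcomp_add HA HB).
have [bf Hbf] := HB.
exists (RComp bf [:: RMu tf; RProj 0]) => x.
pose W : pred nat := fun m => A [:: m; code x] || B [:: m; code x].
have [n Wn Wmin] : exists2 n, W n & forall m, W m -> n <= m.
  have [s Ws] : exists s, W s.
    by have [/HP [s Hs] | /HnP [s Hs]] := classic (P x); exists s; rewrite /W Hs ?orbT.
  by have [n Hn Hmin] := ex_minnP (ex_intro W s Ws); exists n.
have Heval : eval (RComp bf [:: RMu tf; RProj 0]) [:: code x] (B [:: n; code x]).
  apply: (@eComp _ _ _ [:: n; code x]); last exact: Hbf.
  constructor; last by constructor; [exact: (eProj 0 [:: code x]) | constructor].
  apply: (eval_mu_min (P := W)) => // m.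
  by have := Htf [:: m; code x] erefl; rewrite /W; case: (A _); case: (B _).
split=> [Px | nPx].
  suff Bn : B [:: n; code x] by rewrite Bn in Heval.
  by case/orP: Wn => // An; case: (HnP x) => _ /(_ (ex_intro _ n An)).
suff Bn : B [:: n; code x] = false by rewrite Bn in Heval.
by apply/negP => Bn; apply: nPx; apply/HP; exists n.
Qed.

Local Open Scope ring_scope.

Theorem theorem2 (R : rat -> Prop) (tau1 tau2 : nat -> int) :
  infinite_set R ->
  computable_NZ tau1 -> computable_NZ tau2 ->
  (forall k, tau2 k != 0) ->
  (forall q, R q <-> exists k, q = (tau1 k)%:~R / (tau2 k)%:~R) ->
  re_dioph (finitely_many_solutions_in R) ->
  decidable_dioph (has_solution_in R).
Proof.
move=> Rinf tau1_comp tau2_comp tau2_neq0 R_enum fin_re.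
have [B [HB Bspec]] := rcomp_solution_test tau1_comp tau2_comp tau2_neq0.
have [S [HS Sspec]] := rcomp_code_dshift.
have [A [HA Aspec]] := re_dioph_preimage fin_re HS Sspec.
apply: (decidable_by_witnesses HA HB) => d.
  rewrite (has_solution_in_enumP _ R_enum).
  by split=> -[L HL]; exists L; move: HL; rewrite Bspec => /eqP.
by rewrite -Aspec finitely_many_solutions_dshift.
Qed.
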